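(* Let $(G,\mathcal{T},(A^\circ,B^\circ),k)$ be a Terminal Separation instance, let $\mathcal{T}'\subseteq\mathcal{T}$ be the set of terminal pairs disjoint from $A^\circ\cup B^\circ$, and let $\{s,t\}\in\mathcal{T}'$. Let $(A_s,B_t)$ be a terminal separation of minimum cost among those extending $(A^\circ\cup\{s\},B^\circ\cup\{t\})$, and $(A_t,B_s)$ a terminal separation of minimum cost among those extending $(A^\circ\cup\{t\},B^\circ\cup\{s\})$. Suppose that neither $(A_s,B_t)$ nor $(A_t,B_s)$ contains in $A\cup B$ any terminal pair of $\mathcal{T}'$ other than $\{s,t\}$. Then for every set $A$ with $A^\circ\cup\{s\}\subseteq A\subseteq V(G)\setminus B^\circ$ whose only terminal from pairs of $\mathcal{T}'$ is $s$, we have $d(A)-d(A^\circ)\ge d(A_s)-d(A^\circ)$; and symmetrically, for every set $B$ with $B^\circ\cup\{s\}\subseteq B\subseteq V(G)\setminus A^\circ$ whose only terminal from pairs of $\mathcal{T}'$ is $s$, we have $d(B)-d(B^\circ)\ge d(B_s)-d(B^\circ)$.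
   Context: Graphs may have multiple edges but no loops; $d(X)$ is the number of edges with exactly one endpoint in $X$. For a family $\mathcal{T}$ of pairwise disjoint vertex pairs (terminals are their vertices), a terminal separation is a pair $(A,B)$ of disjoint vertex sets such that each pair in $\mathcal{T}$ either has one vertex in $A$ and one in $B$ or is disjoint from $A\cup B$; $(A',B')$ extends $(A,B)$ if $A\subseteq A'$, $B\subseteq B'$; cost $c(A,B)=(d(A)+d(B))/2$. A Terminal Separation instance $(G,\mathcal{T},(A^\circ,B^\circ),k)$ has every terminal of degree at most one and $(A^\circ,B^\circ)$ a terminal separation. *)

(* Multigraph: vertices V : finType, edges E : finType with
   endpoints eu, ev : E -> V (parallel edges allowed; loops excluded by hypothesis). *)
From mathcomp Require Import all_boot all_order all_algebra.
Set Implicit Arguments. Unset Strict Implicit. Unset Printing Implicit Defensive.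
Import Order.TTheory GRing.Theory Num.Theory.

Section Defs.
Variables (V E : finType) (eu ev : E -> V).

Definition dcut (X : {set V}) : nat :=
  #|[set e : E | (eu e \in X) != (ev e \in X)]|.

Definition deg (v : V) : nat := #|[set e : E | (eu e == v) || (ev e == v)]|.

Definition cost (A B : {set V}) : rat := ((dcut A + dcut B)%:R / 2%:R)%R.

Definition pair_family (T : {set {set V}}) : Prop :=
  (forall P, P \in T -> #|P| = 2) /\ trivIset T.

Definition terminals (T : {set {set V}}) : {set V} := cover T.

Definition terminal_separation (T : {set {set V}}) (A B : {set V}) : Prop :=
  [disjoint A & B] /\
  forall P, P \in T ->
    (#|P :&: A| = 1 /\ #|P :&: B| = 1) \/ [disjoint P & A :|: B].

Definition extends (A B A' B' : {set V}) : Prop := A \subset A' /\ B \subset B'.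

Definition TS_instance (T : {set {set V}}) (A0 B0 : {set V}) (k : nat) : Prop :=
  pair_family T /\
  (forall v, v \in terminals T -> deg v <= 1) /\
  terminal_separation T A0 B0.

Definition min_cost_ext (T : {set {set V}}) (A1 B1 A B : {set V}) : Prop :=
  terminal_separation T A B /\ extends A1 B1 A B /\
  forall A' B', terminal_separation T A' B' -> extends A1 B1 A' B' ->
    (cost A B <= cost A' B')%R.

End Defs.

(* Uncrossing.
   For A as in the statement, (A \ B_t, B_t \ A) is again a terminal separation
   extending (A0 + s, B0 + t): pairs meeting A0 or B0 stay separated, {s, t} is
   separated, and every other free pair avoids both sides, because A meets no free
   terminal besides s and, by hypothesis, no such pair lies in A_s + B_t (so it avoids
   A_s + B_t altogether).  Minimality and posimodularity of the cut function,
   d(A \ B) + d(B \ A) <= d(A) + d(B), give d(A_s) + d(B_t) <= d(A) + d(B_t).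
   The statement about B is the same argument with the two sides exchanged. *)
From mathcomp Require Import all_boot all_order all_algebra zify.
Import Order.TTheory GRing.Theory Num.Theory.

Lemma dcut_setD_posimodular (V E : finType) (eu ev : E -> V) (Z W : {set V}) :
  dcut eu ev (Z :\: W) + dcut eu ev (W :\: Z) <= dcut eu ev Z + dcut eu ev W.
Proof.
rewrite /dcut -cardsUI -[X in _ <= X]cardsUI.
apply: leq_add; apply: subset_leq_card; apply/subsetP=> e;
rewrite !(in_setU, in_setI, inE);
by case: (eu e \in Z); case: (ev e \in Z); case: (eu e \in W); case: (ev e \in W).
Qed.

Section PairIntersections.

Context {V : finType} {P X Y : {set V}}.

Lemma card_setI_disjointU :
  [disjoint X & Y] -> #|P :&: (X :|: Y)| = #|P :&: X| + #|P :&: Y|.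
Proof.
move=> dXY; rewrite setIUr cardsU -[RHS]subn0; congr (_ - _).
apply/eqP; rewrite cards_eq0; apply/eqP/setP=> v.
by rewrite !inE; case vX: (v \in X); rewrite ?(disjointFr dXY vX) !andbF.
Qed.

Hypotheses (P2 : #|P| = 2) (dXY : [disjoint X & Y]).

Lemma split_pair_subsetU : #|P :&: X| = 1 -> #|P :&: Y| = 1 -> P \subset X :|: Y.
Proof.
move=> PX1 PY1; apply/setIidPl/eqP.
by rewrite eqEcard subsetIl card_setI_disjointU // PX1 PY1 P2.
Qed.

Lemma split_pair_widen {A B : {set V}} : A \subset X -> B \subset Y ->
  #|P :&: A| = 1 -> #|P :&: B| = 1 -> #|P :&: X| = 1 /\ #|P :&: Y| = 1.
Proof.
move=> sAX sBY PA1 PB1.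
have PXY : #|P :&: X| + #|P :&: Y| <= 2.
  by rewrite -card_setI_disjointU // -P2 subset_leq_card // subsetIl.
have PXge : 1 <= #|P :&: X| by rewrite -PA1 subset_leq_card // setIS.
have PYge : 1 <= #|P :&: Y| by rewrite -PB1 subset_leq_card // setIS.
by split; lia.
Qed.

End PairIntersections.

Lemma terminal_separation_sym {V : finType} {T : {set {set V}}} {A B : {set V}} :
  terminal_separation T A B -> terminal_separation T B A.
Proof.
move=> [dAB split]; split=> [|P /split]; first by rewrite disjoint_sym.
by rewrite setUC; case=> [[]|]; [left|right].
Qed.

Lemma min_cost_ext_sym {V E : finType} {eu ev : E -> V} {T : {set {set V}}}
    {A1 B1 A B : {set V}} :
  min_cost_ext eu ev T A1 B1 A B -> min_cost_ext eu ev T B1 A1 B A.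
Proof.
move=> [sepAB [[sA sB] minAB]]; split; first exact: terminal_separation_sym.
split=> [//|A' B' /terminal_separation_sym sep' [sA' sB']].
by rewrite /cost addnC [(dcut _ _ A' + _)%N]addnC; apply: minAB.
Qed.

Definition free_pairs {V : finType} (T : {set {set V}}) (A0 B0 : {set V}) :=
  [set P in T | [disjoint P & A0 :|: B0]].

Lemma free_pairsC {V : finType} (T : {set {set V}}) A0 B0 :
  free_pairs T A0 B0 = free_pairs T B0 A0.
Proof. by rewrite /free_pairs setUC. Qed.

Section Uncrossing.

Context {V : finType} {T : {set {set V}}} {A0 B0 : {set V}} {x y : V}.
Context {AX BY Z : {set V}}.
Let F := free_pairs T A0 B0.

Hypotheses (pairT : forall P, P \in T -> #|P| = 2)
  (sep0 : terminal_separation T A0 B0) (xy_free : [set x; y] \in F)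
  (sepXY : terminal_separation T AX BY) (extXY : extends (x |: A0) (y |: B0) AX BY)
  (only_xy : forall P, P \in F -> P != [set x; y] -> ~~ (P \subset AX :|: BY))
  (sub_xZ : x |: A0 \subset Z) (sub_ZB : Z \subset ~: B0) (Z_free : Z :&: cover F = [set x]).

Let dXY : [disjoint AX & BY] := sepXY.1.
Let xAX : x \in AX. Proof. by rewrite (subsetP extXY.1) ?setU11. Qed.
Let yBY : y \in BY. Proof. by rewrite (subsetP extXY.2) ?setU11. Qed.
Let xZ : x \in Z. Proof. by rewrite (subsetP sub_xZ) ?setU11. Qed.

Let in_cover_free {P v} : P \in F -> v \in P -> v \in cover F.
Proof. by move=> PF vP; apply/bigcupP; exists P. Qed.

Let yZ : y \notin Z.
Proof.
have xy : x != y.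
  move: (pairT _ (setIdP xy_free).1); rewrite cards2; by case: (x != y).
apply/negP=> yZ; have : y \in Z :&: cover F.
  by rewrite inE yZ (in_cover_free xy_free) // !inE eqxx orbT.
by rewrite Z_free inE eq_sym (negbTE xy).
Qed.

Lemma uncrossed_extends : extends (x |: A0) (y |: B0) (Z :\: BY) (BY :\: Z).
Proof.
split; apply/subsetP=> v vA; rewrite inE.
- by rewrite (subsetP sub_xZ) // andbT (disjointFr dXY) // (subsetP extXY.1).
- rewrite (subsetP extXY.2) // andbT; apply: contraNN yZ.
  case/setU1P: vA => [<- //| vB0 vZ].
  by move: (subsetP sub_ZB v vZ); rewrite inE vB0.
Qed.

Let free_pair_disjoint {P} : P \in F -> P != [set x; y] -> [disjoint P & AX :|: BY].
Proof.
move=> PF Pxy; have PT := (setIdP PF).1.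
case: (sepXY.2 P PT) => // [[PA PB]].
by case/negP: (only_xy _ PF Pxy); rewrite split_pair_subsetU ?(pairT _ PT).
Qed.

Lemma uncrossed_terminal_separation : terminal_separation T (Z :\: BY) (BY :\: Z).
Proof.
have [sA sB] := uncrossed_extends.
have dZB : [disjoint Z :\: BY & BY :\: Z].
  rewrite -setI_eq0; apply/eqP/setP=> v; rewrite !inE.
  by case: (v \in Z); case: (v \in BY).
split=> // P PT.
have [PF|nPF] := boolP (P \in F).
  have [->|Pxy] := eqVneq P [set x; y].
    have -> : [set x; y] :&: (Z :\: BY) = [set x].
      apply/setP=> v; rewrite !inE; case: (eqVneq v x) => [->|_] /=.
        by rewrite xZ (disjointFr dXY xAX).
      by case: eqP => // ->; rewrite yBY.
    have -> : [set x; y] :&: (BY :\: Z) = [set y].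
      apply/setP=> v; rewrite !inE; case: (eqVneq v y) => [->|_] /=.
        by rewrite yZ yBY orbT.
      by case: eqP => // ->; rewrite xZ.
    by left; rewrite !cards1.
  right; have dP := free_pair_disjoint PF Pxy.
  rewrite -setI_eq0; apply/eqP/setP=> v; rewrite !inE.
  apply/negbTE; apply/andP=> -[vP /orP[/andP[_ vZ]|/andP[_ vB]]].
    have : v \in Z :&: cover F by rewrite inE vZ (in_cover_free PF).
    rewrite Z_free inE => /eqP vx; subst v.
    by move: (disjointFr dP vP); rewrite inE xAX.
  by move: (disjointFr dP vP); rewrite inE vB orbT.
left; case: (sep0.2 P PT) => [[PA0 PB0]|dP]; last by rewrite inE PT dP in nPF.
apply: (split_pair_widen (pairT _ PT) dZB _ _ PA0 PB0).
  by apply: subset_trans sA; apply: subsetUr.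
by apply: subset_trans sB; apply: subsetUr.
Qed.

End Uncrossing.

Lemma min_cost_ext_dcut_le {V E : finType} {eu ev : E -> V} {T : {set {set V}}}
    {A0 B0 : {set V}} {x y : V} {AX BY Z : {set V}} :
  pair_family T -> terminal_separation T A0 B0 ->
  [set x; y] \in free_pairs T A0 B0 ->
  min_cost_ext eu ev T (x |: A0) (y |: B0) AX BY ->
  (forall P, P \in free_pairs T A0 B0 -> P != [set x; y] -> ~~ (P \subset AX :|: BY)) ->
  x |: A0 \subset Z -> Z \subset ~: B0 -> Z :&: cover (free_pairs T A0 B0) = [set x] ->
  dcut eu ev AX <= dcut eu ev Z.
Proof.
move=> [pairT _] sep0 xy_free [sepXY [extXY minXY]] only_xy sub_xZ sub_ZB Z_free.
have := minXY _ _
  (uncrossed_terminal_separation pairT sep0 xy_free sepXY extXY only_xy sub_xZ sub_ZB Z_free)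
  (uncrossed_extends pairT xy_free sepXY extXY sub_xZ sub_ZB Z_free).
rewrite /cost ler_pM2r ?invr_gt0 ?ltr0n // ler_nat => costXY.
rewrite -(leq_add2r (dcut eu ev BY)); apply: leq_trans costXY _.
exact: dcut_setD_posimodular.
Qed.

Theorem lemma5p2 (V E : finType) (eu ev : E -> V)
  (noloop : forall e, eu e != ev e)
  (T : {set {set V}}) (A0 B0 : {set V}) (k : nat)
  (inst : TS_instance eu ev T A0 B0 k)
  (s t : V)
  (Tp := [set P in T | [disjoint P & A0 :|: B0]])
  (hst : [set s; t] \in Tp)
  (As Bt At Bs : {set V})
  (hsmin : min_cost_ext eu ev T (s |: A0) (t |: B0) As Bt)
  (htmin : min_cost_ext eu ev T (t |: A0) (s |: B0) At Bs)
  (hs_only : forall P, P \in Tp -> P != [set s; t] -> ~~ (P \subset As :|: Bt))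
  (ht_only : forall P, P \in Tp -> P != [set s; t] -> ~~ (P \subset At :|: Bs)) :
  (forall A : {set V}, s |: A0 \subset A -> A \subset ~: B0 ->
     A :&: cover Tp = [set s] ->
     ((dcut eu ev A)%:Z - (dcut eu ev A0)%:Z >= (dcut eu ev As)%:Z - (dcut eu ev A0)%:Z)%R)
  /\
  (forall B : {set V}, s |: B0 \subset B -> B \subset ~: A0 ->
     B :&: cover Tp = [set s] ->
     ((dcut eu ev B)%:Z - (dcut eu ev B0)%:Z >= (dcut eu ev Bs)%:Z - (dcut eu ev B0)%:Z)%R).
Proof.
have [pairs [_ sep0]] := inst.
have TpC : Tp = free_pairs T B0 A0 by rewrite -free_pairsC.
split=> [A | B]; rewrite lerD2r lez_nat.
  exact: min_cost_ext_dcut_le pairs sep0 hst hsmin hs_only.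
rewrite TpC in hst ht_only * => sub_sB sub_BA B_free.
have only_st P : P \in free_pairs T B0 A0 -> P != [set s; t] -> ~~ (P \subset Bs :|: At).
  by rewrite [Bs :|: At]setUC; apply: ht_only.
exact: min_cost_ext_dcut_le pairs (terminal_separation_sym sep0) hst
  (min_cost_ext_sym htmin) only_st sub_sB sub_BA B_free.
Qed.
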